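(* There exist universal constants $\delta_0 > 0$ and $c > 0$ such that if $\Omega \subset \mathbb{R}^2$ is convex, has area $1$ and satisfies $\mathcal{A}(\Omega) \leq \delta_0$, then $\Omega \subset B$ for some disk $B$ with $$ |B| \leq 1 + c \cdot \mathcal{A}(\Omega)^{1/2}.$$
   Context: The Fraenkel asymmetry of $\Omega$ is $\mathcal{A}(\Omega) = \inf_{B} |B \,\Delta\, \Omega| / |\Omega|$, where the infimum is over all disks $B \subset \mathbb{R}^2$ with $|B| = |\Omega|$ and $B \,\Delta\, \Omega = (B\setminus\Omega)\cup(\Omega\setminus B)$ is the symmetric difference. *)

From HB Require Import structures.
From mathcomp Require Import all_boot all_order all_algebra.
From mathcomp Require Import all_classical all_reals all_analysis.
Set Implicit Arguments. Unset Strict Implicit. Unset Printing Implicit Defensive.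
Import Order.TTheory GRing.Theory Num.Theory.
Local Open Scope classical_set_scope.
Local Open Scope ring_scope.

(* On Lebesgue-measurable
   sets (in particular on convex sets, and on symmetric differences of convex
   sets with disks) it coincides with the area. *)
Definition area {R : realType} (A : set (R * R)) : \bar R :=
  mu_ext ((@lebesgue_measure R) \x (@lebesgue_measure R))%E A.

Definition convex2 {R : realType} (O : set (R * R)) : Prop :=
  forall p q : R * R, O p -> O q -> forall t : R, 0 <= t <= 1 ->
    O (t * p.1 + (1 - t) * q.1, t * p.2 + (1 - t) * q.2).

Definition disk {R : realType} (a b r : R) : set (R * R) :=
  [set p | (p.1 - a) ^+ 2 + (p.2 - b) ^+ 2 <= r ^+ 2].

Definition is_disk {R : realType} (B : set (R * R)) : Prop :=
  exists a b r : R, 0 < r /\ B = disk a b r.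

(* Fraenkel asymmetry: inf over disks B with |B| = |O| of |B Δ O| / |O|
   (meaningful when 0 < |O| < +oo; `+` is the symmetric difference). *)
Definition fraenkel {R : realType} (O : set (R * R)) : \bar R :=
  ereal_inf [set (area (B `+` O) * ((fine (area O))^-1)%:E)%E
            | B in [set B | is_disk B /\ area B = area O]].

(* Let B be a disk of area 1 and radius r nearly realizing the asymmetry d of
   the convex set O, so that |B Δ O| <= 2d.  If a point p of O lies at distance
   r + t from the centre, let D ⊂ B be the disk of radius r/4 centred 3r/4 from
   the centre in the direction of p.  By convexity the homothety of centre p and
   ratio L = t / (2t + r) maps D ∩ O into O \ B, so L^2 (|D| - 2d) <= 2d with
   |D| = 1/16; hence t = O(r √d) and O lies in the concentric disk of radius
   r (1 + 24 √d), of area (1 + 24 √d)^2 <= 1 + 624 √d.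
   When d = 0 the infimum need not be attained.  Still, for every small s there
   is a disk of radius r + s^2/(12 r) containing O, and any two such centres are
   s-close, because O cannot fit in the intersection of two disks whose centres
   are far apart.  A common limit centre is obtained coordinatewise as the
   supremum of the left ends of the pairwise intersecting intervals
   [c - s, c + s]. *)

From HB Require Import structures.
From mathcomp Require Import all_boot all_order all_algebra.
From mathcomp Require Import all_classical all_reals all_analysis.
From mathcomp Require Import measurable_realfun ring lra.
Set Implicit Arguments. Unset Strict Implicit. Unset Printing Implicit Defensive.
Import Order.TTheory GRing.Theory Num.Theory.
Local Open Scope classical_set_scope.
Local Open Scope ring_scope.

Section homothety_area.
Context {R : realType}.
Local Notation leb := (@lebesgue_measure R).
Local Notation leb2 := ((@lebesgue_measure R) \x (@lebesgue_measure R))%E.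
Local Notation plane := (measurableTypeR R * measurableTypeR R)%type.

Definition homothety (a1 a2 k : R) (p : R * R) : R * R :=
  (a1 + k * p.1, a2 + k * p.2).

Lemma measurable_affine (a k : R) : measurable_fun setT (fun x : R => a + k * x).
Proof. by apply: measurable_funD => //; exact: measurable_funM. Qed.

Lemma measurable_affine_preimage (a k : R) (A : set R) : measurable A ->
  measurable [set x | A (a + k * x)].
Proof.
by move=> mA; rewrite -[X in measurable X]setTI; exact: measurable_affine.
Qed.

Lemma lebesgue_measure_affine_preimage (a k : R) (A : set R) :
  0 < k -> measurable A -> leb [set x | A (a + k * x)] = ((k^-1)%:E * leb A)%E.
Proof.
move=> k0 mA.
pose f := (fun x : R => a + k * x) : _ -> measurableTypeR R.
pose kk : {nonneg R} := NngNum (ltW k0).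
suff -> : leb A = (k%:E * leb [set x : R | A (a + k * x)%R])%E.
  by rewrite muleA -EFinM mulVf ?gt_eqF // mul1e.
have /(_ (measurable_affine a k)) :=
  @lebesgue_measure_unique R (mscale kk (pushforward leb f)).
apply => // X /ocitvP [->|[[x y] /= xy ->]]; first by rewrite !measure0.
rewrite /mscale /= /pushforward.
have -> : f @^-1` `]x, y] = `]((x - a) / k), ((y - a) / k)]%classic.
  apply/seteqP; split => z; rewrite /f /= !in_itv /= ltr_pdivrMr // ltrBlDl
    ler_pdivlMr // lerBrDl ![k * z]mulrC //.
rewrite !lebesgue_measure_itv /= !lte_fin ltr_pM2r ?invr_gt0 // ltrD2r xy.
rewrite -!EFinD -EFinM; congr EFin; field; lra.
Qed.

Lemma measurable_homothety (a1 a2 k : R) :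
  measurable_fun setT (homothety a1 a2 k : plane -> plane).
Proof.
apply: measurable_fun_pair.
  exact: (measurableT_comp (measurable_affine a1 k) measurable_fst).
exact: (measurableT_comp (measurable_affine a2 k) measurable_snd).
Qed.

Lemma product_lebesgue_homothety_preimage (a1 a2 k : R) (X : set plane) :
  0 < k -> measurable X ->
  leb2 (homothety a1 a2 k @^-1` X) = ((k ^- 2)%:E * leb2 X)%E.
Proof.
move=> k0 mX.
have k20 : 0 < k ^+ 2 by rewrite exprn_gt0.
pose kk : {nonneg R} := NngNum (ltW k20).
suff -> : leb2 X = ((k ^+ 2)%:E * leb2 (homothety a1 a2 k @^-1` X))%E.
  by rewrite muleA -EFinM mulVf ?gt_eqF // mul1e.
have /(_ (measurable_homothety a1 a2 k)) :=
  @product_measure_unique _ _ _ _ R leb leb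
    (mscale kk (pushforward leb2 (homothety a1 a2 k : plane -> plane))).
apply => // A B mA mB.
change ((k ^+ 2)%:E * leb2 (homothety a1 a2 k @^-1` (A `*` B)) = leb A * leb B)%E.
have -> : homothety a1 a2 k @^-1` (A `*` B) =
  [set x | A (a1 + k * x)] `*` [set x | B (a2 + k * x)] by [].
rewrite product_measure1E; [|exact: measurable_affine_preimage..].
transitivity ((k ^+ 2)%:E * (((k^-1)%:E * leb A) * ((k^-1)%:E * leb B)))%E.
  by rewrite -(lebesgue_measure_affine_preimage a1 k0 mA)
             -(lebesgue_measure_affine_preimage a2 k0 mB).
rewrite muleACA muleA -EFinM !muleA -EFinM.
by rewrite (_ : k ^+ 2 * (k^-1 / k) = 1) ?mul1e //; field; lra.
Qed.

Lemma area_homothety_preimage_le (a1 a2 k : R) (X : set (R * R)) : 0 < k ->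
  ((k ^+ 2)%:E * area (homothety a1 a2 k @^-1` X) <= area X)%E.
Proof.
move=> k0; rewrite /area /mu_ext.
apply: le_ereal_inf_tmp => _ [F [mF XF] <-].
set G := fun i => homothety a1 a2 k @^-1` F i.
have mG i : measurable (G i).
  by rewrite -[X in measurable X]setTI; exact: measurable_homothety.
have k2 : (0 <= (k ^+ 2)%:E)%E by rewrite lee_fin exprn_ge0 ?ltW.
apply: le_trans (_ : ((k ^+ 2)%:E * \sum_(i <oo) leb2 (G i) <= _)%E).
  apply: lee_wpmul2l => //; apply: ereal_inf_lbound; exists G => //.
  by split => // p /XF [i _ Fi]; exists i.
rewrite -nneseriesZl; last by move=> i _; exact: measure_ge0.
apply: lee_nneseries => [i _ _|i _].
  by apply: mule_ge0 => //; exact: measure_ge0.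
rewrite product_lebesgue_homothety_preimage // muleA -EFinM.
by rewrite mulfV ?gt_eqF ?exprn_gt0 // mul1e.
Qed.

Lemma area_homothety_preimage (a1 a2 k : R) (X : set (R * R)) : 0 < k ->
  area (homothety a1 a2 k @^-1` X) = ((k ^- 2)%:E * area X)%E.
Proof.
move=> k0.
have ki0 : 0 < k^-1 by rewrite invr_gt0.
have kk : (0 <= (k ^- 2)%:E)%E by rewrite lee_fin invr_ge0 exprn_ge0 ?ltW.
apply/le_anti/andP; split.
  have := area_homothety_preimage_le a1 a2 X k0.
  move=> /(lee_wpmul2l kk); rewrite muleA -EFinM mulVf ?mul1e //.
  by rewrite gt_eqF // exprn_gt0.
have inv : homothety (- a1 / k) (- a2 / k) k^-1 @^-1` (homothety a1 a2 k @^-1` X)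
    = X.
  by apply/seteqP; split => -[x y]; rewrite /homothety /=;
    congr X; congr pair; field; lra.
by have := area_homothety_preimage_le (- a1 / k) (- a2 / k)
  (homothety a1 a2 k @^-1` X) ki0; rewrite inv exprVn.
Qed.

Lemma area_ge0 (A : set (R * R)) : (0 <= area A)%E.
Proof. by apply: mu_ext_ge0 => X; exact: measure_ge0. Qed.

Lemma le_area (A B : set (R * R)) : A `<=` B -> (area A <= area B)%E.
Proof. exact: le_mu_ext. Qed.

Lemma areaU_le (A B : set (R * R)) : (area (A `|` B) <= area A + area B)%E.
Proof. exact: outer_measureU2. Qed.

End homothety_area.

Section disk_geometry.
Context {R : realType}.

Lemma le_disk (a b r s : R) : 0 <= r -> r <= s -> disk a b r `<=` disk a b s.
Proof. by move=> r0 rs p; rewrite /disk /= => /le_trans; apply; nra. Qed.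

Lemma cauchy_schwarz2 (u1 u2 w1 w2 : R) :
  (u1 * w1 + u2 * w2) ^+ 2 <= (u1 ^+ 2 + u2 ^+ 2) * (w1 ^+ 2 + w2 ^+ 2).
Proof. by have := sqr_ge0 (u1 * w2 - u2 * w1); nra. Qed.

Lemma unit_dot_le (u1 u2 w1 w2 s : R) : u1 ^+ 2 + u2 ^+ 2 = 1 ->
  w1 ^+ 2 + w2 ^+ 2 <= s ^+ 2 -> 0 <= s -> - s <= u1 * w1 + u2 * w2 <= s.
Proof.
move=> hu hw s0; have := cauchy_schwarz2 u1 u2 w1 w2; rewrite hu mul1r => h.
by apply/andP; split; nra.
Qed.

Lemma disk_sub_disk (a b r l s u1 u2 : R) : u1 ^+ 2 + u2 ^+ 2 = 1 ->
  0 <= l -> 0 <= s -> l + s <= r ->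
  disk (a + l * u1) (b + l * u2) s `<=` disk a b r.
Proof.
move=> hu l0 s0 lsr [x1 x2]; rewrite /disk /= => hx.
have /andP[_ dot] := unit_dot_le hu hx s0.
have -> : (x1 - a) ^+ 2 + (x2 - b) ^+ 2 = l ^+ 2 * (u1 ^+ 2 + u2 ^+ 2)
  + 2 * l * (u1 * (x1 - (a + l * u1)) + u2 * (x2 - (b + l * u2)))
  + ((x1 - (a + l * u1)) ^+ 2 + (x2 - (b + l * u2)) ^+ 2) by ring.
rewrite hu mulr1; nra.
Qed.

Lemma homothety_small_disk_outside (a b r t L u1 u2 x1 x2 : R) :
  u1 ^+ 2 + u2 ^+ 2 = 1 -> 0 < r -> 0 < t -> L * (2 * t + r) = t ->
  disk (a + 3 * r / 4 * u1) (b + 3 * r / 4 * u2) (r / 4) (x1, x2) ->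
  ~ disk a b r (L * x1 + (1 - L) * (a + (r + t) * u1),
                L * x2 + (1 - L) * (b + (r + t) * u2)).
Proof.
move=> hu r0 t0 hL; rewrite /disk /= => hx.
have L0 : 0 < L by nra.
have r4 : 0 <= r / 4 by lra.
have /andP[dot _] := unit_dot_le hu hx r4.
set y1 := _ - a; set y2 := _ - b.
have yu : u1 * y1 + u2 * y2 = L * (3 * r / 4 * (u1 ^+ 2 + u2 ^+ 2)
    + (u1 * (x1 - (a + 3 * r / 4 * u1)) + u2 * (x2 - (b + 3 * r / 4 * u2))))
    + (1 - L) * (r + t) * (u1 ^+ 2 + u2 ^+ 2) by rewrite /y1 /y2; ring.
rewrite hu !mulr1 in yu.
have far : r + t / 2 <= u1 * y1 + u2 * y2 by rewrite yu; nra.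
have := cauchy_schwarz2 u1 u2 y1 y2; rewrite hu mul1r => cs.
by apply/negP; rewrite -ltNge; nra.
Qed.

Lemma polar_decomposition (a b r : R) (p : R * R) :
  0 <= r -> r ^+ 2 < (p.1 - a) ^+ 2 + (p.2 - b) ^+ 2 ->
  exists t u1 u2, [/\ 0 < t, u1 ^+ 2 + u2 ^+ 2 = 1 &
    p = (a + (r + t) * u1, b + (r + t) * u2)].
Proof.
case: p => p1 p2 /= r0 far.
set d := Num.sqrt ((p1 - a) ^+ 2 + (p2 - b) ^+ 2).
have dd : d ^+ 2 = (p1 - a) ^+ 2 + (p2 - b) ^+ 2.
  by rewrite sqr_sqrtr // addr_ge0 ?sqr_ge0.
have d0 : 0 <= d := sqrtr_ge0 _.
have rd : r < d by rewrite -dd in far; nra.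
have dn0 : d != 0 by rewrite gt_eqF // (le_lt_trans r0).
exists (d - r), ((p1 - a) / d), ((p2 - b) / d); split.
- by rewrite subr_gt0.
- by rewrite !expr_div_n -mulrDl -dd divff // expf_neq0.
- by congr pair; rewrite [r + _]addrC subrK mulrC divfK // addrC subrK.
Qed.

Lemma area_disk (a b r : R) : 0 < r ->
  area (disk a b r) = ((r ^+ 2)%:E * area (disk 0 0 1))%E.
Proof.
move=> r0.
have -> : disk a b r = homothety (- a / r) (- b / r) r^-1 @^-1` disk 0 0 1.
  have e x y : (- a / r + r^-1 * x - 0) ^+ 2 + (- b / r + r^-1 * y - 0) ^+ 2
      = ((x - a) ^+ 2 + (y - b) ^+ 2) / r ^+ 2 by field; lra.
  apply/seteqP; split => -[x y];
  by rewrite /disk /homothety /= expr1n e ler_pdivrMr ?exprn_gt0 // mul1r.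
by rewrite area_homothety_preimage ?invr_gt0 // -exprVn invrK.
Qed.

Lemma area_disk_ratio (a b r a' b' s : R) : 0 < r -> area (disk a b r) = 1%E ->
  0 < s -> area (disk a' b' s) = ((s / r) ^+ 2)%:E.
Proof.
move=> r0 aB s0.
have unit_area : area (disk 0 0 1) = ((r ^- 2)%:E * area (disk a b r))%E.
  by rewrite (area_disk a b r0) muleA -EFinM mulVf ?mul1e // gt_eqF // exprn_gt0.
by rewrite area_disk // unit_area aB mule1 -EFinM expr_div_n.
Qed.

Lemma area1_disk_radius (a b r a' b' s : R) : 0 < r -> area (disk a b r) = 1%E ->
  0 < s -> area (disk a' b' s) = 1%E -> s = r.
Proof.
move=> r0 aB s0; rewrite (area_disk_ratio _ _ r0 aB s0) => -[h].
have : s ^+ 2 = r ^+ 2 by rewrite -(divfK (lt0r_neq0 r0) s) exprMn h mul1r.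
by move=> ?; apply/le_anti/andP; split; nra.
Qed.

End disk_geometry.

Section fraenkel_asymmetry.
Context {R : realType}.

Lemma fraenkel_ge0 (O : set (R * R)) : area O = 1%E -> (0 <= fraenkel O)%E.
Proof.
move=> aO; apply: le_ereal_inf_tmp => _ [B _ <-].
by rewrite aO /= invr1 mule1 area_ge0.
Qed.

Lemma fraenkel_approx_disk (O : set (R * R)) (dl eps : R) : area O = 1%E ->
  fraenkel O = dl%:E -> 0 < eps ->
  exists a b r, [/\ 0 < r, area (disk a b r) = 1%E &
     (area (disk a b r `+` O) <= (dl + eps)%:E)%E].
Proof.
move=> aO fE e0.
have /(lb_ereal_inf_adherent e0) : fraenkel O \is a fin_num by rewrite fE.
move=> [_ [B [[a [b [r [r0 ->]]]] aB]] <-]; rewrite -/(fraenkel O) fE.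
rewrite aO /= invr1 mule1 => lt_eps.
exists a, b, r; split => //; first by rewrite aB.
by rewrite EFinD ltW.
Qed.

End fraenkel_asymmetry.

Section far_point.
Context {R : realType}.

(* L^2 <= 32 e forces L < 1/3, hence t < r and t <= 3 r L. *)
Lemma far_point_arith (r t L s e : R) : 0 < r -> 0 < t ->
  L * (2 * t + r) = t -> L ^+ 2 * s <= e -> 1 / 16 <= s + e -> 0 <= e ->
  e <= 1 / 300 -> t ^+ 2 <= 288 * r ^+ 2 * e.
Proof.
move=> r0 t0 hL h1 h2 e0 e1.
have L0 : 0 < L by nra.
have s32 : 1 / 32 <= s by lra.
have L32 : L ^+ 2 <= 32 * e by nra.
have L3 : L < 1 / 3 by nra.
have tr : t < r by nra.
have t3 : t <= 3 * r * L by nra.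
have : t ^+ 2 <= 9 * r ^+ 2 * L ^+ 2 by nra.
nra.
Qed.

(* The set on the left is the image of D ∩ O, D the disk of radius r/4, under the
   homothety of centre p (the far point of O) and ratio L. *)
Lemma shrunk_part_in_symdiff (O : set (R * R)) (a b r t L u1 u2 : R) :
  convex2 O -> u1 ^+ 2 + u2 ^+ 2 = 1 -> 0 < r -> 0 < t -> L * (2 * t + r) = t ->
  O (a + (r + t) * u1, b + (r + t) * u2) ->
  homothety ((1 - L^-1) * (a + (r + t) * u1)) ((1 - L^-1) * (b + (r + t) * u2))
    L^-1 @^-1` (disk (a + 3 * r / 4 * u1) (b + 3 * r / 4 * u2) (r / 4) `&` O)
  `<=` disk a b r `+` O.
Proof.
move=> convexO hu r0 t0 hL Op [y1 y2]; rewrite /homothety /= => -[Dx Ox].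
have L0 : 0 < L by nra.
set x1 := _ + _ * y1 in Dx Ox; set x2 := _ + _ * y2 in Dx Ox.
have -> : (y1, y2) = (L * x1 + (1 - L) * (a + (r + t) * u1),
                      L * x2 + (1 - L) * (b + (r + t) * u2)).
  by congr pair; rewrite /x1 /x2; field; rewrite gt_eqF.
right; split; last exact: homothety_small_disk_outside hu r0 t0 hL Dx.
by apply: (convexO _ _ Ox Op); rewrite ltW //=; nra.
Qed.

Lemma far_point_excess (O : set (R * R)) (a b r t u1 u2 e : R) :
  convex2 O -> u1 ^+ 2 + u2 ^+ 2 = 1 -> 0 < r -> 0 < t ->
  O (a + (r + t) * u1, b + (r + t) * u2) -> area (disk a b r) = 1%E ->
  (area (disk a b r `+` O) <= e%:E)%E -> 0 <= e -> e <= 1 / 300 ->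
  t ^+ 2 <= 288 * r ^+ 2 * e.
Proof.
move=> convexO hu r0 t0 Op aB aBO e0 e1.
set D := disk (a + 3 * r / 4 * u1) (b + 3 * r / 4 * u2) (r / 4).
pose L := t / (2 * t + r).
have hL : L * (2 * t + r) = t by rewrite divfK // gt_eqF //; lra.
have L0 : 0 < L by rewrite divr_gt0 //; lra.
have aD : area D = (1 / 16)%:E.
  rewrite (area_disk_ratio _ _ r0 aB) ?divr_gt0 //.
  by congr EFin; field; lra.
have DB : D `<=` disk a b r by apply: disk_sub_disk => //; lra.
have aDO_le : (area (D `&` O) <= (1 / 16)%:E)%E.
  by rewrite -aD le_area // => ? [].
have aDO_fin : area (D `&` O) \is a fin_num.
  by rewrite ge0_fin_numE ?area_ge0 // (le_lt_trans aDO_le) ?ltry.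
set s := fine (area (D `&` O)); have sE : area (D `&` O) = s%:E by rewrite fineK.
apply: (far_point_arith (s := s) r0 t0 hL) => //.
  pose c1 := (1 - L^-1) * (a + (r + t) * u1).
  pose c2 := (1 - L^-1) * (b + (r + t) * u2).
  rewrite -lee_fin EFinM -sE -[L ^+ 2]invrK -exprVn.
  rewrite -(area_homothety_preimage c1 c2) ?invr_gt0 //.
  apply: le_trans aBO; apply: le_area.
  exact: (shrunk_part_in_symdiff convexO hu r0 t0 hL Op).
rewrite -lee_fin EFinD -sE -aD.
apply: le_trans (leeD2l _ aBO); apply: le_trans (areaU_le _ _).
apply: le_area => x Dx; have [Ox|nOx] := pselect (O x); first by left.
by right; left; split => //; exact: DB.
Qed.

Lemma convex_subset_concentric_disk (O : set (R * R)) (a b r e T : R) :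
  convex2 O -> 0 < r -> area (disk a b r) = 1%E ->
  (area (disk a b r `+` O) <= e%:E)%E -> 0 <= e -> e <= 1 / 300 ->
  0 <= T -> 288 * r ^+ 2 * e <= T ^+ 2 -> O `<=` disk a b (r + T).
Proof.
move=> convexO r0 aB aBO e0 e1 T0 eT p Op.
have [near|far] := leP ((p.1 - a) ^+ 2 + (p.2 - b) ^+ 2) (r ^+ 2).
  by apply: le_disk near; lra.
have [t [u1 [u2 [t0 hu pE]]]] := polar_decomposition (ltW r0) far.
rewrite pE in Op *; rewrite /disk /=.
have := far_point_excess convexO hu r0 t0 Op aB aBO e0 e1.
rewrite (_ : _ + _ = (r + t) ^+ 2 * (u1 ^+ 2 + u2 ^+ 2)); last by ring.
by rewrite hu mulr1; nra.
Qed.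

Lemma small_asymmetry_subset_disk (O : set (R * R)) (dl : R) :
  convex2 O -> area O = 1%E -> fraenkel O = dl%:E -> 0 < dl -> dl <= 1 / 600 ->
  exists a b r, [/\ 0 < r, O `<=` disk a b r &
    (area (disk a b r) <= (1 + 624 * Num.sqrt dl)%:E)%E].
Proof.
move=> convexO aO dlE dl_gt0 dl_small.
have [a [b [r [r0 aB aBO]]]] := fraenkel_approx_disk aO dlE dl_gt0.
set q := Num.sqrt dl; have qq : q ^+ 2 = dl by rewrite sqr_sqrtr // ltW.
have q0 : 0 <= q := sqrtr_ge0 dl.
set T := 24 * r * q.
have T0 : 0 <= T by rewrite !mulr_ge0 // ltW.
exists a, b, (r + T); split; first by lra.
  by apply: (convex_subset_concentric_disk convexO r0 aB aBO); rewrite /T; nra.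
rewrite (area_disk_ratio _ _ r0 aB) ?lee_fin; last by lra.
have -> : ((r + T) / r) ^+ 2 = (1 + 24 * q) ^+ 2.
  by rewrite /T; field; rewrite gt_eqF.
have q1 : q <= 1 by nra.
nra.
Qed.

End far_point.

Section zero_asymmetry.
Context {R : realType}.

Lemma pairwise_le_common_point (T : Type) (P : T -> Prop) (l u : T -> R) :
  (exists i, P i) -> (forall i j, P i -> P j -> l i <= u j) ->
  exists x, forall i, P i -> l i <= x <= u i.
Proof.
move=> [i0 Pi0] lu.
have ub : has_ubound (l @` P) by exists (u i0) => _ [j Pj <-]; exact: lu.
exists (sup (l @` P)) => i Pi; apply/andP; split.
  by apply: (ub_le_sup ub); exists i.
by apply: ge_sup; [exists (l i0), i0 | move=> _ [j Pj <-]; exact: lu].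
Qed.

Lemma area1_sq_radius_le (O : set (R * R)) (a b r k : R) (m : R * R) :
  0 < r -> area (disk a b r) = 1%E -> area O = 1%E ->
  O `<=` [set p | (p.1 - m.1) ^+ 2 + (p.2 - m.2) ^+ 2 <= k] -> r ^+ 2 <= k.
Proof.
move=> r0 aB aO Ok; rewrite leNgt; apply/negP => kr.
set s := Num.max k (r ^+ 2 / 2).
have r2 : 0 < r ^+ 2 by rewrite exprn_gt0.
have s0 : 0 < s by rewrite lt_max divr_gt0 ?orbT.
have sr : s < r ^+ 2 by rewrite gt_max kr /=; lra.
have Os : O `<=` disk m.1 m.2 (Num.sqrt s).
  move=> p /Ok pk; rewrite /disk /= sqr_sqrtr ?(ltW s0) //.
  by apply: le_trans pk _; rewrite le_max lexx.
have := le_area Os; rewrite aO (area_disk_ratio _ _ r0 aB) ?sqrtr_gt0 //.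
rewrite lee_fin expr_div_n sqr_sqrtr ?(ltW s0) // ler_pdivlMr // mul1r.
by rewrite leNgt sr.
Qed.

Lemma centers_close (O : set (R * R)) (a b r s : R) (q q' : R * R) :
  0 < r -> area (disk a b r) = 1%E -> area O = 1%E ->
  O `<=` disk q.1 q.2 s -> O `<=` disk q'.1 q'.2 s ->
  (q.1 - q'.1) ^+ 2 + (q.2 - q'.2) ^+ 2 <= 4 * (s ^+ 2 - r ^+ 2).
Proof.
move=> r0 aB aO Oq Oq'.
set D := (q.1 - q'.1) ^+ 2 + (q.2 - q'.2) ^+ 2.
suff : r ^+ 2 <= s ^+ 2 - D / 4 by lra.
apply: (area1_sq_radius_le (m := ((q.1 + q'.1) / 2, (q.2 + q'.2) / 2)) r0 aB aO).
move=> p Op; have := Oq p Op; have := Oq' p Op; rewrite /disk /=.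
have -> : (p.1 - (q.1 + q'.1) / 2) ^+ 2 + (p.2 - (q.2 + q'.2) / 2) ^+ 2 =
  ((p.1 - q.1) ^+ 2 + (p.2 - q.2) ^+ 2 + ((p.1 - q'.1) ^+ 2 + (p.2 - q'.2) ^+ 2))
  / 2 - D / 4 by rewrite /D; field.
lra.
Qed.

Lemma zero_asymmetry_near_disk (O : set (R * R)) (a b r sg : R) :
  convex2 O -> area O = 1%E -> fraenkel O = 0%:E -> 0 < r ->
  area (disk a b r) = 1%E -> 0 < sg -> sg <= r ->
  exists q : R * R, O `<=` disk q.1 q.2 (r + sg ^+ 2 / (12 * r)).
Proof.
move=> convexO aO fO r0 aB sg0 sgr.
set T := sg ^+ 2 / (12 * r).
have r12 : 0 < 12 * r by rewrite mulr_gt0.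
have hT : T * (12 * r) = sg ^+ 2 by rewrite divfK // gt_eqF.
have T0 : 0 < T by rewrite divr_gt0 ?exprn_gt0.
set eps := T ^+ 2 / (288 * r ^+ 2).
have r288 : 0 < 288 * r ^+ 2 by rewrite mulr_gt0 ?exprn_gt0.
have hE : eps * (288 * r ^+ 2) = T ^+ 2 by rewrite divfK // gt_eqF.
have e0 : 0 < eps by rewrite divr_gt0 ?exprn_gt0.
have [a' [b' [r' [r'0 aB' aB'O]]]] := fraenkel_approx_disk aO fO e0.
have r'r := area1_disk_radius r0 aB r'0 aB'; subst r'.
rewrite add0r in aB'O; exists (a', b').
apply: (convex_subset_concentric_disk convexO r0 aB' aB'O);
  [exact: ltW | | exact: ltW | nra].
have T12 : 12 * T <= r by nra.
have : T ^+ 2 <= r ^+ 2 by nra.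
nra.
Qed.

Lemma near_center_sq_dist_le (z1 z2 s1 s2 r sg : R) : 0 < r -> 0 < sg -> sg <= r ->
  z1 ^+ 2 + z2 ^+ 2 <= (r + sg ^+ 2 / (12 * r)) ^+ 2 ->
  - sg <= s1 <= sg -> - sg <= s2 <= sg ->
  (z1 + s1) ^+ 2 + (z2 + s2) ^+ 2 <= r ^+ 2 + 11 * r * sg.
Proof.
move=> r0 sg0 sgr; set T := sg ^+ 2 / (12 * r) => hz /andP[s1l s1u] /andP[s2l s2u].
have hT : T * (12 * r) = sg ^+ 2 by rewrite divfK // gt_eqF // mulr_gt0.
have T0 : 0 <= T by nra.
have Ts : T <= sg / 12 by nra.
have z1u : z1 <= r + T by nra.
have z1l : - (r + T) <= z1 by nra.
have z2u : z2 <= r + T by nra.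
have z2l : - (r + T) <= z2 by nra.
have c1 : z1 * s1 <= (r + T) * sg by nra.
have c2 : z2 * s2 <= (r + T) * sg by nra.
nra.
Qed.

Lemma near_centers_close (O : set (R * R)) (a b r s s' : R) (q q' : R * R) :
  0 < r -> area (disk a b r) = 1%E -> area O = 1%E ->
  0 < s -> s <= r -> O `<=` disk q.1 q.2 (r + s ^+ 2 / (12 * r)) ->
  0 < s' -> s' <= r -> O `<=` disk q'.1 q'.2 (r + s' ^+ 2 / (12 * r)) ->
  q.1 - s <= q'.1 + s' /\ q.2 - s <= q'.2 + s'.
Proof.
move=> r0 aB aO s0 sr Oq s'0 s'r Oq'.
set m := Num.max s s'.
have [sm s'm] : s <= m /\ s' <= m by rewrite !le_max !lexx orbT.
have mr : m <= r by rewrite ge_max sr s'r.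
have m0 : 0 < m by apply: lt_le_trans sm.
have ms : m <= s + s' by rewrite ge_max; apply/andP; split; lra.
suff D : (q.1 - q'.1) ^+ 2 + (q.2 - q'.2) ^+ 2 <= m ^+ 2.
  have := sqr_ge0 (q.1 - q'.1); have := sqr_ge0 (q.2 - q'.2).
  by split; nra.
have grow (x : R) (c : R * R) : 0 <= x -> x <= m ->
    O `<=` disk c.1 c.2 (r + x ^+ 2 / (12 * r)) ->
    O `<=` disk c.1 c.2 (r + m ^+ 2 / (12 * r)).
  move=> x0 xm Oc; apply: (subset_trans Oc); apply: le_disk.
    by rewrite addr_ge0 ?divr_ge0 ?sqr_ge0 ?mulr_ge0 // ltW.
  by rewrite lerD2l ler_pM2r ?invr_gt0 ?mulr_gt0 //; nra.
have := centers_close r0 aB aO (grow _ _ (ltW s0) sm Oq)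
  (grow _ _ (ltW s'0) s'm Oq').
set T := m ^+ 2 / (12 * r).
have hT : T * (12 * r) = m ^+ 2 by rewrite divfK // gt_eqF // mulr_gt0.
have T0 : 0 <= T by rewrite divr_ge0 ?sqr_ge0 // mulr_ge0 // ltW.
have Tr : 12 * T <= r by nra.
nra.
Qed.

Lemma zero_asymmetry_subset_disk (O : set (R * R)) :
  convex2 O -> area O = 1%E -> fraenkel O = 0%:E ->
  exists a b r, [/\ 0 < r, O `<=` disk a b r & area (disk a b r) = 1%E].
Proof.
move=> convexO aO fO.
have [a [b [r [r0 aB _]]]] := fraenkel_approx_disk aO fO ltr01.
pose P (i : R * (R * R)) :=
  0 < i.1 <= r /\ O `<=` disk i.2.1 i.2.2 (r + i.1 ^+ 2 / (12 * r)).
have Pex : exists i, P i.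
  have [q Oq] := zero_asymmetry_near_disk convexO aO fO r0 aB r0 (lexx r).
  by exists (r, q); split => //; rewrite r0 lexx.
have close i j : P i -> P j ->
    i.2.1 - i.1 <= j.2.1 + j.1 /\ i.2.2 - i.1 <= j.2.2 + j.1.
  move: i j => [s q] [s' q'] [/andP[s0 sr] Oq] [/andP[s'0 s'r] Oq'].
  exact: near_centers_close r0 aB aO s0 sr Oq s'0 s'r Oq'.
have [x hx] := pairwise_le_common_point Pex (fun i j Pi Pj => (close i j Pi Pj).1).
have [y hy] := pairwise_le_common_point Pex (fun i j Pi Pj => (close i j Pi Pj).2).
exists x, y, r; split => //; last first.
  by rewrite (area_disk_ratio _ _ r0 aB r0) divff ?gt_eqF // expr1n.
move=> p Op; rewrite /disk /=.
apply/ler_addgt0Pr => eps eps0.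
set sg := Num.min r (eps / (11 * r)).
have sg0 : 0 < sg by rewrite lt_min r0 divr_gt0 // mulr_gt0.
have sgr : sg <= r by rewrite ge_min lexx.
have sge : 11 * r * sg <= eps.
  by rewrite -ler_pdivlMl ?mulr_gt0 // mulrC ge_min lexx orbT.
have [q Oq] := zero_asymmetry_near_disk convexO aO fO r0 aB sg0 sgr.
have Pq : P (sg, q) by rewrite /P sg0.
have /andP[x1 x2] : q.1 - sg <= x <= q.1 + sg by exact: hx Pq.
have /andP[y1 y2] : q.2 - sg <= y <= q.2 + sg by exact: hy Pq.
have b1 : - sg <= q.1 - x <= sg by apply/andP; split; lra.
have b2 : - sg <= q.2 - y <= sg by apply/andP; split; lra.
have := near_center_sq_dist_le r0 sg0 sgr (Oq p Op) b1 b2.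
by rewrite !subrKA => /le_trans; apply; rewrite lerD2l.
Qed.

End zero_asymmetry.

Theorem lemma4 (R : realType) :
  exists delta0 c : R, 0 < delta0 /\ 0 < c /\
    forall O : set (R * R),
      convex2 O -> area O = 1%E -> (fraenkel O <= delta0%:E)%E ->
      exists B : set (R * R), is_disk B /\ O `<=` B /\
        (area B <= (1 + c * Num.sqrt (fine (fraenkel O)))%:E)%E.
Proof.
exists (1 / 600), 624; do 2 (split; first by lra).
move=> O convexO aO small.
have Ffin : fraenkel O \is a fin_num.
  by rewrite ge0_fin_numE ?fraenkel_ge0 // (le_lt_trans small) ?ltry.
set dl := fine (fraenkel O); have dlE : fraenkel O = dl%:E by rewrite fineK.
have dl0 : 0 <= dl by rewrite -lee_fin -dlE fraenkel_ge0.
have dl_small : dl <= 1 / 600 by rewrite -lee_fin -dlE.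
have [dl_gt0|dl_le0] := ltP 0 dl.
  have [a [b [r [r0 Osub aB]]]] :=
    small_asymmetry_subset_disk convexO aO dlE dl_gt0 dl_small.
  by exists (disk a b r); split; first by exists a, b, r.
have dl_eq0 : dl = 0 by apply/le_anti; rewrite dl_le0 dl0.
rewrite dl_eq0 in dlE *.
have [a [b [r [r0 Osub aB]]]] := zero_asymmetry_subset_disk convexO aO dlE.
exists (disk a b r); split; first by exists a, b, r.
by rewrite sqrtr0 mulr0 addr0 aB.
Qed.
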